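(* Let $K\subseteq\mathbb{R}^2$ be a centrally symmetric closed convex set with non-empty interior. Then $\mu_2(K)\le 2\mu_1(K)$.
   Context: For $j=1,2$, the $j$-th covering minimum is $\mu_j(K):=\inf\{t\ge0:\text{every }(2-j)\text{-dimensional affine subspace of }\mathbb{R}^2\text{ intersects }tK+\mathbb{Z}^2\}$. Thus $\mu_1(K)$ is the least $t$ such that every line meets $tK+\mathbb{Z}^2$, and $\mu_2(K)$ is the least $t$ such that $tK+\mathbb{Z}^2=\mathbb{R}^2$. $K$ is centrally symmetric if $K=2c-K$ for some $c\in\mathbb{R}^2$. *)

(* the plane R^2 is modelled as R * R with the
   product (= Euclidean) topology, for an arbitrary R : realType. *)
From HB Require Import structures.
From mathcomp Require Import all_boot all_order all_algebra.
From mathcomp Require Import all_classical all_reals all_analysis.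
Set Implicit Arguments. Unset Strict Implicit. Unset Printing Implicit Defensive.
Import Order.TTheory GRing.Theory Num.Theory numFieldNormedType.Exports.
Local Open Scope classical_set_scope.
Local Open Scope ring_scope.

Section Plane.
Variable R : realType.
Notation pt := (R * R)%type.

Definition scale_pt (t : R) (x : pt) : pt := (t * x.1, t * x.2).
Definition add_pt (x y : pt) : pt := (x.1 + y.1, x.2 + y.2).

Definition lattice : set pt :=
  [set z | exists m n : int, z = (m%:~R, n%:~R)].

Definition scaled_translates (t : R) (K : set pt) : set pt :=
  [set add_pt (scale_pt t k) z | k in K & z in lattice].

Definition convex_set2 (K : set pt) : Prop :=
  forall x y, K x -> K y -> forall l : R, 0 <= l -> l <= 1 ->
    K (add_pt (scale_pt (1 - l) x) (scale_pt l y)).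

Definition centrally_symmetric (K : set pt) : Prop :=
  exists c : pt, K = [set (2 * c.1 - x.1, 2 * c.2 - x.2) | x in K].

Definition line (p v : pt) : set pt := [set add_pt p (scale_pt s v) | s in [set: R]].

Definition mu1 (K : set pt) : R :=
  inf [set t : R | 0 <= t /\
        forall p v : pt, v != (0, 0) -> line p v `&` scaled_translates t K !=set0].

(* mu_2: every point (0-dim affine subspace) meets tK + Z^2, i.e. tK + Z^2 = R^2 *)
Definition mu2 (K : set pt) : R :=
  inf [set t : R | 0 <= t /\ scaled_translates t K = [set: pt]].

End Plane.

(* If every line meets tK + Z^2 and K is symmetric about c, then for every
   nonzero integer vector u the level line u.x = 1/2 + t u.c hits a lattice
   translate of tK; this gives a point k of K (possibly after reflecting
   through c) with t u.(k - c) >= 1/2. Hence the body L = 2t(K - c) satisfies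
   h_L(u) >= 1 for all such u, where h_L is the support function, and it
   remains to see that such a symmetric convex L covers the plane by lattice
   translates. Cutting L with a large square keeps this hypothesis, so L may
   be assumed compact. Take a primitive v minimising h_L and complete it to a
   unimodular basis (v, w) in which the maximiser of v, scaled to height 1,
   has w-coordinate in [0, 1). Together with the normalised maximisers of w
   and w - v (their v-coordinates lie in [-1, 1] by minimality of h_L(v)), a
   case analysis shows that the chords of L at v-heights 1/2 and -1/2 have
   w-lengths summing to at least 1. By convexity L then contains, at every
   v-height in [-1/2, 1/2], a segment of w-length at least 1, into which every
   point of the plane is moved by some lattice vector. *)

From HB Require Import structures.
From mathcomp Require Import all_boot all_order all_algebra.
From mathcomp Require Import all_classical all_reals all_analysis.
From mathcomp Require Import ring lra zify.
Import Order.TTheory GRing.Theory Num.Theory numFieldNormedType.Exports.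
Local Open Scope classical_set_scope.
Local Open Scope ring_scope.
Set Implicit Arguments. Unset Strict Implicit. Unset Printing Implicit Defensive.

Section LatticeCovering.
Variable R : realType.
Notation pt := (R * R)%type.
Implicit Types (K L : set pt) (u v w : int * int).

Definition comb (l : R) (x y : pt) : pt := add_pt (scale_pt (1 - l) x) (scale_pt l y).

Definition opp_pt (x : pt) : pt := (- x.1, - x.2).

Definition origin_symmetric L := forall x, L x -> L (opp_pt x).

Definition dotz u (x : pt) : R := u.1%:~R * x.1 + u.2%:~R * x.2.

Lemma dotz_comb u l x y : dotz u (comb l x y) = (1 - l) * dotz u x + l * dotz u y.
Proof. by rewrite /dotz /=; ring. Qed.

Lemma dotz_opp u x : dotz u (opp_pt x) = - dotz u x.
Proof. by rewrite /dotz /=; ring. Qed.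

Lemma dotz_comb0 u l x : dotz u (comb l (0, 0) x) = l * dotz u x.
Proof. by rewrite dotz_comb /dotz /=; ring. Qed.

Definition square (M : R) : set pt := [set x | `|x.1| <= M /\ `|x.2| <= M].

Lemma subset_square (M M' : R) : M <= M' -> square M `<=` square M'.
Proof. by move=> MM' x [x1 x2]; split; exact: le_trans MM'. Qed.

Lemma compact_square (M : R) : compact (square M).
Proof.
have -> : square M = `[-M, M] `*` `[-M, M].
  by apply/seteqP; split => x /=; rewrite !in_itv /= -!ler_norml.
by apply: compact_setX; exact: segment_compact.
Qed.

Lemma origin_symmetric_square (M : R) : origin_symmetric (square M).
Proof. by move=> x [x1 x2]; split; rewrite /= normrN. Qed.

Lemma convex_square (M : R) : convex_set2 (square M).
Proof.
have comb_le (a b l : R) : 0 <= l -> l <= 1 -> `|a| <= M -> `|b| <= M ->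
    `|(1 - l) * a + l * b| <= M.
  move=> l0 l1 aM bM; apply: le_trans (ler_normD _ _) _.
  rewrite !normrM (ger0_norm l0) ger0_norm ?subr_ge0 //.
  have e1 : (1 - l) * `|a| <= (1 - l) * M by rewrite ler_wpM2l // subr_ge0.
  have e2 : l * `|b| <= l * M by rewrite ler_wpM2l.
  by apply: le_trans (lerD e1 e2) _; lra.
by move=> x y [x1 x2] [y1 y2] l l0 l1; split; exact: comb_le.
Qed.

Lemma convex_setI (A B : set pt) : convex_set2 A -> convex_set2 B -> convex_set2 (A `&` B).
Proof. by move=> cA cB x y [Ax Bx] [Ay By] l l0 l1; split; [exact: cA | exact: cB]. Qed.

Lemma origin_symmetricI (A B : set pt) :
  origin_symmetric A -> origin_symmetric B -> origin_symmetric (A `&` B).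
Proof. by move=> sA sB x [Ax Bx]; split; [exact: sA | exact: sB]. Qed.

Definition lattice_cover L := forall y : pt, exists z : int * int, L (y.1 - z.1%:~R, y.2 - z.2%:~R).

Lemma lattice_cover_sub L L' : L `<=` L' -> lattice_cover L -> lattice_cover L'.
Proof. by move=> LL' covL y; have [z Lz] := covL y; exists z; exact: LL'. Qed.

(* For symmetric [L] this says that the lattice width of [L] is at least [2]. *)
Definition lattice_wide L := forall u, u != (0, 0) -> exists2 x, L x & 1 <= dotz u x.

(** * Chords at heights 1/2 and -1/2 *)

Lemma ge1_of_excess (x N D : R) : x = 1 + N / D -> 0 <= N -> 0 < D -> 1 <= x.
Proof. by move=> -> N0 D0; rewrite lerDl divr_ge0 // ltW. Qed.

(* Stated at [R], so that [lra] and [nra] can use the hypotheses it produces. *)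
Lemma le_or_gt (x y : R) : x <= y \/ y < x.
Proof. by case: (lerP x y); [left | right]. Qed.

Definition coords a b (x : pt) : R * R := (dotz a x, dotz b x).

(* The first coordinate of the point at height [t] on the segment [p q]. *)
Definition level_abscissa (p q : R * R) (t : R) : R :=
  ((q.2 - t) * p.1 + (t - p.2) * q.1) / (q.2 - p.2).

Section Chords.
Variables a b : int * int.
Local Notation cd := (coords a b).

Lemma level_point L U V t : convex_set2 L -> L U -> L V ->
  (cd U).2 < (cd V).2 -> (cd U).2 <= t <= (cd V).2 ->
  exists2 X, L X & cd X = (level_abscissa (cd U) (cd V) t, t).
Proof.
move=> cL LU LV ltUV /andP[tU tV].
set th := (t - (cd U).2) / ((cd V).2 - (cd U).2).
have d0 : (cd V).2 - (cd U).2 != 0 by rewrite subr_eq0 gt_eqF.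
exists (comb th U V).
  apply: cL => //; first by rewrite divr_ge0 ?subr_ge0 // ltW.
  by rewrite ler_pdivrMr ?subr_gt0 // mul1r lerD2r.
by rewrite /coords !dotz_comb /level_abscissa /th /=; congr pair; field.
Qed.

(* By symmetry of [L], this says that the horizontal chord of [L] at
   height [1/2] in the coordinates [cd] has length at least [1]. *)
Definition long_half_chord L := exists Rp Rm,
  [/\ L Rp, L Rm, dotz b Rp = 1/2, dotz b Rm = -(1/2) & 1 <= dotz a Rp + dotz a Rm].

Lemma long_half_chord_of_segments L U1 V1 U2 V2 : convex_set2 L ->
  L U1 -> L V1 -> L U2 -> L V2 ->
  (cd U1).2 < (cd V1).2 -> (cd U1).2 <= 1/2 <= (cd V1).2 ->
  (cd U2).2 < (cd V2).2 -> (cd U2).2 <= -(1/2) <= (cd V2).2 ->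
  1 <= level_abscissa (cd U1) (cd V1) (1/2) + level_abscissa (cd U2) (cd V2) (-(1/2)) ->
  long_half_chord L.
Proof.
move=> cL LU1 LV1 LU2 LV2 lt1 h1 lt2 h2 hsum.
have [Rp LRp [aRp bRp]] := level_point cL LU1 LV1 lt1 h1.
have [Rm LRm [aRm bRm]] := level_point cL LU2 LV2 lt2 h2.
by exists Rp, Rm; split => //; rewrite aRp aRm.
Qed.

(* Each case finds the chords at heights [1/2] and [-1/2] on segments joining
   two of the points [P], [-P], [Q], [S]. *)
Section LongHalfChord.
Variables (L : set pt) (P Q S : pt) (a0 b0 c0 : R).
Hypotheses (cvxL : convex_set2 L) (symL : origin_symmetric L) (LP : L P) (LQ : L Q) (LS : L S).
Hypotheses (aP : dotz a P = a0) (bP : dotz b P = 1) (aQ : dotz a Q = 1) (bQ : dotz b Q = b0).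
Hypotheses (aS : dotz a S = 1 + c0) (bS : dotz b S = c0).

Lemma long_half_chord_Q_low : 0 <= a0 <= 1 -> -1 <= b0 <= 0 -> long_half_chord L.
Proof.
move=> /andP[a0_ge0 a0_le1] /andP[b0_ge b0_le0]; have [hb|hb] := le_or_gt b0 (-(1/2)).
  apply: (long_half_chord_of_segments cvxL LQ LP LQ LP);
    rewrite /level_abscissa /= ?dotz_opp ?aP ?bP ?aQ ?bQ ?aS ?bS; try lra.
  by apply: (@ge1_of_excess _ (1 + b0 - 2 * a0 * b0) (1 - b0)); [field; lra|nra|lra].
apply: (long_half_chord_of_segments cvxL LQ LP (symL LP) LQ);
  rewrite /level_abscissa /= ?dotz_opp ?aP ?bP ?aQ ?bQ ?aS ?bS; try lra.
by apply: (@ge1_of_excess _ (b0 * (b0 - a0)) ((1 - b0) * (1 + b0))); [field; lra|nra|nra].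
Qed.

Lemma long_half_chord_S_high : 0 <= a0 <= 1 -> 0 <= c0 <= 1 -> long_half_chord L.
Proof.
move=> /andP[a0_ge0 a0_le1] /andP[c0_ge0 c0_le1]; have [hc|hc] := le_or_gt c0 (1/2).
  apply: (long_half_chord_of_segments cvxL LS LP (symL LP) LS);
    rewrite /level_abscissa /= ?dotz_opp ?aP ?bP ?aQ ?bQ ?aS ?bS; try lra.
  by apply: (@ge1_of_excess _ (c0 * (1 - a0 + c0)) ((1 - c0) * (1 + c0))); [field; lra|nra|nra].
apply: (long_half_chord_of_segments cvxL (symL LP) LS (symL LP) LS);
  rewrite /level_abscissa /= ?dotz_opp ?aP ?bP ?aQ ?bQ ?aS ?bS; try lra.
by apply: (@ge1_of_excess _ (1 + c0 - 2 * a0 * c0) (1 + c0)); [field; lra|nra|lra].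
Qed.

Lemma long_half_chord_S_mid : 0 <= a0 <= 1 -> 0 < b0 <= 1 -> -(1/2) <= c0 < 0 ->
  long_half_chord L.
Proof.
move=> /andP[a0_ge0 a0_le1] /andP[b0_gt0 b0_le1] /andP[hc1 hc2]; have [hb|hb] := le_or_gt b0 (1/2).
  apply: (long_half_chord_of_segments cvxL LQ LP (symL LP) LS);
    rewrite /level_abscissa /= ?dotz_opp ?aP ?bP ?aQ ?bQ ?aS ?bS; try lra.
  apply: (@ge1_of_excess _ (b0 * (1 + c0) - a0 * (b0 + c0)) (2 * (1 - b0) * (1 + c0)));
    [field; lra| |nra].
  by have [hbc|hbc] := le_or_gt (b0 + c0) 0; nra.
apply: (long_half_chord_of_segments cvxL LS LQ (symL LP) LS);
  rewrite /level_abscissa /= ?dotz_opp ?aP ?bP ?aQ ?bQ ?aS ?bS; try lra.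
apply: (@ge1_of_excess _ ((1 - a0) * (b0 - c0) * (1 + 2 * c0) + c0 * (b0 * (1 + 2 * c0) - 1))
                        (2 * (b0 - c0) * (1 + c0))); [field; lra| |nra].
have h1 : 0 <= (1 - a0) * (b0 - c0) by nra.
have h2 : b0 * (1 + 2 * c0) <= 1 by nra.
nra.
Qed.

Lemma long_half_chord_S_low : 0 <= a0 <= 1 -> 0 < b0 <= 1 -> -1 <= c0 < -(1/2) ->
  long_half_chord L.
Proof.
move=> /andP[a0_ge0 a0_le1] /andP[b0_gt0 b0_le1] /andP[c0_ge hc]; have [hb|hb] := le_or_gt b0 (1/2).
  apply: (long_half_chord_of_segments cvxL LQ LP LS LQ);
    rewrite /level_abscissa /= ?dotz_opp ?aP ?bP ?aQ ?bQ ?aS ?bS; try lra.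
  apply: (@ge1_of_excess _ (b0 * (1 + c0 * (1 - 2 * b0)) + a0 * (1 - 2 * b0) * (b0 - c0))
                          (2 * (1 - b0) * (b0 - c0))); [field; lra| |nra].
  have h1 : 0 <= 1 + c0 * (1 - 2 * b0) by nra.
  have h2 : 0 <= a0 * (1 - 2 * b0) by nra.
  nra.
apply: (long_half_chord_of_segments cvxL LS LQ LS LQ);
  rewrite /level_abscissa /= ?dotz_opp ?aP ?bP ?aQ ?bQ ?aS ?bS; try lra.
by apply: (@ge1_of_excess _ (b0 - c0 + 2 * b0 * c0) (b0 - c0)); [field; lra|nra|lra].
Qed.

Lemma long_half_chord_PQS : 0 <= a0 <= 1 -> -1 <= b0 <= 1 -> -1 <= c0 <= 1 ->
  long_half_chord L.
Proof.
move=> ha /andP[b0_ge b0_le1] /andP[c0_ge c0_le1].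
have [b0_le0|b0_gt0] := le_or_gt b0 0.
  by apply: long_half_chord_Q_low; rewrite ?b0_ge.
have [c0_ge0|c0_lt0] := le_or_gt 0 c0.
  by apply: long_half_chord_S_high; rewrite ?c0_ge0.
have [hc|hc] := le_or_gt (-(1/2)) c0.
  by apply: long_half_chord_S_mid; rewrite ?b0_gt0 ?hc.
by apply: long_half_chord_S_low; rewrite ?b0_gt0 ?c0_ge.
Qed.

End LongHalfChord.
End Chords.

(** * Covering from a long chord *)

Lemma level_abscissa_const (p q : R * R) t : p.1 = q.1 -> p.2 != q.2 -> level_abscissa p q t = p.1.
Proof. by rewrite /level_abscissa => <- pq; field; rewrite subr_eq0 eq_sym. Qed.

Definition unimodular v w := v.1 * w.2 - v.2 * w.1 = 1.

Lemma unimodular_neq0 v w : unimodular v w -> v != (0, 0) /\ w != (0, 0).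
Proof.
by case: v w => [v1 v2] [w1 w2]; rewrite /unimodular /= => det; split; apply/eqP; case; lia.
Qed.

Lemma dotz_frame v w (x : pt) : unimodular v w ->
  x = (dotz v x * w.2%:~R - dotz w x * v.2%:~R, dotz w x * v.1%:~R - dotz v x * w.1%:~R).
Proof.
rewrite /unimodular => det; have detR (r : R) : r = r * (v.1%:~R * w.2%:~R - v.2%:~R * w.1%:~R).
  by rewrite -!intrM -intrB det mulr1.
rewrite /dotz [LHS]surjective_pairing; congr pair.
  by rewrite {1}(detR x.1); ring.
by rewrite {1}(detR x.2); ring.
Qed.

(* At each height in [[-1/2, 1/2]] the segment joining the two chords has
   [w]-length at least [1] (this is [gap] below). *)
Lemma lattice_cover_of_long_half_chord L v w : convex_set2 L -> origin_symmetric L ->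
  unimodular v w -> long_half_chord w v L -> lattice_cover L.
Proof.
move=> cL sL det [Rp [Rm [LRp LRm vRp vRm D1]]] y.
pose j := Num.floor (dotz v y + 1/2).
have := floor_le (dotz v y + 1/2); have := floorD1_gt (dotz v y + 1/2).
rewrite -/j intrD => j_ub j_lb.
pose t := dotz v y - j%:~R.
have [X2 LX2 [wX2 vX2]] : exists2 X, L X & coords w v X =
    (level_abscissa (coords w v Rm) (coords w v Rp) t, t).
  by apply: level_point => //=; rewrite vRm vRp /t; lra.
have [X1 LX1 [wX1 vX1]] : exists2 X, L X & coords w v X =
    (level_abscissa (coords w v (opp_pt Rp)) (coords w v (opp_pt Rm)) t, t).
  by apply: level_point => //=; try exact: sL; rewrite !dotz_opp vRm vRp /t; lra.
have gap : dotz w X2 - dotz w X1 = dotz w Rp + dotz w Rm.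
  by rewrite wX1 wX2 /level_abscissa /= !dotz_opp vRm vRp; field.
pose m := Num.floor (dotz w X2 - dotz w y).
have := floor_le (dotz w X2 - dotz w y); have := floorD1_gt (dotz w X2 - dotz w y).
rewrite -/m intrD => m_ub m_lb.
pose s := dotz w y + m%:~R.
have [Y LY [vY wY]] : exists2 Y, L Y & coords v w Y =
    (level_abscissa (coords v w X1) (coords v w X2) s, s).
  by apply: level_point => //=; rewrite /s; lra.
have {}vY : dotz v Y = t.
  have lt12 : dotz w X1 < dotz w X2 by lra.
  by rewrite vY level_abscissa_const //= ?vX1 ?vX2 // lt_eqF.
exists (j * w.2 + m * v.2, - (m * v.1) - j * w.1).
rewrite [X in L X](_ : _ = Y) //.
have [y1 y2] := (congr1 fst (dotz_frame y det), congr1 snd (dotz_frame y det)).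
rewrite [RHS](dotz_frame Y det) vY wY /t /s [y.1]y1 [y.2]y2 /=.
by congr pair; rewrite !(intrD, intrN, intrM); ring.
Qed.

(** * Minimal lattice directions *)

Definition in_box (N : nat) u := (`|u.1| <= N%:Z) && (`|u.2| <= N%:Z).

Definition box_point (N : nat) (i : 'I_(2 * N).+1 * 'I_(2 * N).+1) : int * int :=
  ((i.1 : nat)%:Z - N%:Z, (i.2 : nat)%:Z - N%:Z).

Definition box_index (N : nat) u : 'I_(2 * N).+1 * 'I_(2 * N).+1 :=
  (inord (absz (u.1 + N%:Z)), inord (absz (u.2 + N%:Z))).

Lemma box_indexK N u : in_box N u -> box_point (box_index N u) = u.
Proof.
case: u => u1 u2 /andP[/= h1 h2]; rewrite /box_point /box_index /= !inordK; last 2 first.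
- by lia.
- by lia.
by congr pair; lia.
Qed.

Lemma exists_min_in_box N (P : int * int -> Prop) (F : int * int -> R) u0 :
  P u0 -> (forall u, P u -> in_box N u) -> exists2 u, P u & forall w, P w -> F u <= F w.
Proof.
move=> Pu0 boxP.
have Pi0 : `[< P (box_point (box_index N u0)) >] by apply/asboolP; rewrite box_indexK ?boxP.
case: (@arg_minP _ _ _ _ (fun i => `[< P (box_point i) >]) (F \o @box_point N) Pi0).
move=> i /asboolP Pi imin.
exists (box_point i) => // w Pw; rewrite -(box_indexK (boxP _ Pw)).
by apply: imin; apply/asboolP; rewrite box_indexK ?boxP.
Qed.

Lemma bounded_choice_in_box N (Q : int * int -> pt -> Prop) :
  (forall u, in_box N u -> exists x, Q u x) ->
  exists M, forall u, in_box N u -> exists2 x, Q u x & square M x.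
Proof.
move=> hQ.
have ex u : exists x : pt, in_box N u -> Q u x.
  by case: (boolP (in_box N u)) => [/hQ[x Qx]|_]; [exists x | exists (0, 0)].
have [f fP] := choice ex.
exists (\big[Order.max/0]_(i : 'I_(2 * N).+1 * 'I_(2 * N).+1)
          (`|(f (box_point i)).1| + `|(f (box_point i)).2|)).
move=> u box_u; exists (f u); first exact: fP.
rewrite -(box_indexK box_u); split; apply: le_trans (le_bigmax _ _ (box_index N u)).
  by rewrite lerDl.
by rewrite lerDr.
Qed.

Lemma exists_min_nonzero (F : int * int -> R) (c : R) : 0 < c ->
  (forall u, c * (`|u.1| + `|u.2|)%:~R <= F u) ->
  exists2 u, u != (0, 0) & forall w, w != (0, 0) -> F u <= F w.
Proof.
move=> c_gt0 F_ge.
pose N := (Num.truncn (F (1, 0) / c)).+1.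
have N_gt : F (1, 0) < c * N%:R by rewrite -ltr_pdivrMl // mulrC; exact: truncnS_gt.
pose P u := u != (0, 0) /\ F u <= F (1, 0).
have P_box u : P u -> in_box N u.
  move=> [_ Fu]; have : c * (`|u.1| + `|u.2|)%:~R < c * N%:R.
    exact: le_lt_trans (F_ge u) (le_lt_trans Fu N_gt).
  by rewrite ltr_pM2l // -[N%:R]/(N%:Z%:~R) ltr_int /in_box; lia.
have [u [u_nz u_le] umin] := exists_min_in_box F (conj isT (lexx _) : P (1, 0)) P_box.
exists u => // w w_nz; have [Fw|Fw] := leP (F w) (F (1, 0)); first exact: umin.
exact: le_trans u_le (ltW Fw).
Qed.

Lemma exists_primitive_min (F : int * int -> R) u0 : u0 != (0, 0) ->
  (forall w, w != (0, 0) -> F u0 <= F w) ->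
  (forall g v, 0 < g -> F v <= F (g * v.1, g * v.2)) ->
  exists v, (exists w, unimodular v w) /\ forall w, w != (0, 0) -> F v <= F w.
Proof.
case: u0 => m1 m2 m_nz m_min F_mono.
pose g := gcdz m1 m2.
have g_gt0 : 0 < g.
  have g_ge0 : 0 <= g by rewrite /g /gcdz.
  rewrite lt_def g_ge0 andbT gcdz_eq0.
  by apply: contra m_nz => /andP[/eqP-> /eqP->].
have [e1 [e2 bez]] := Bezoutz m1 m2; rewrite -/g in bez.
have [v [gv1 gv2]] : exists v : int * int, g * v.1 = m1 /\ g * v.2 = m2.
  by exists ((m1 %/ g)%Z, (m2 %/ g)%Z); rewrite !(mulrC g) !divzK ?dvdz_gcdl ?dvdz_gcdr.
clearbody g; exists v; split.
  exists (- e2, e1); rewrite /unimodular /=.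
  by apply: (mulfI (lt0r_neq0 g_gt0)); rewrite mulr1 -{2}bez -gv1 -gv2; ring.
move=> w w_nz; apply: le_trans (m_min w w_nz).
by rewrite -gv1 -gv2; exact: F_mono.
Qed.

(** * Support functions *)

Lemma continuous_dotz u : continuous (dotz u).
Proof. by move=> x; apply: cvgD; apply: cvgMl_tmp; [exact: cvg_fst | exact: cvg_snd]. Qed.

Definition supportf L u : R := sup [set dotz u x | x in L].

Lemma supportP L u : compact L -> L !=set0 ->
  (forall x, L x -> dotz u x <= supportf L u) /\ exists2 x, L x & dotz u x = supportf L u.
Proof.
move=> cL L0.
have [c /[!inE] Lc cmax] := compact_EVT_max L0 cL (continuous_subspaceT (@continuous_dotz u)).
have -> : supportf L u = dotz u c.
  apply/eqP; rewrite eq_le; apply/andP; split.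
    by apply: ge_sup; [exists (dotz u c), c | move=> _ [x Lx <-]; apply: cmax; rewrite inE].
  apply: sup_upper_bound; last by exists c.
  by split; [exists (dotz u c), c | exists (dotz u c) => _ [x Lx <-]; apply: cmax; rewrite inE].
by split; [move=> x Lx; apply: cmax; rewrite inE | exists c].
Qed.

Lemma square_dotz (rho : R) u : 0 <= rho ->
  exists2 x, square rho x & dotz u x = rho * (`|u.1| + `|u.2|)%:~R.
Proof.
move=> rho_ge0.
have sg_le (n : int) : `|rho * (Num.sg n)%:~R| <= rho.
  rewrite normrM ger0_norm //; apply: ler_piMr => //; rewrite -intr_norm normr_sg.
  by case: (n != 0); [exact: lexx | exact: ler01].
exists (rho * (Num.sg u.1)%:~R, rho * (Num.sg u.2)%:~R); first by split; apply: sg_le.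
by rewrite /dotz /= (normrEsg u.1) (normrEsg u.2) intrD !intrM; ring.
Qed.

Lemma supportf_mulz L v (g : int) : compact L -> L (0, 0) -> 0 < g ->
  supportf L v <= supportf L (g * v.1, g * v.2).
Proof.
move=> cpL L0 g_gt0; have Ln : L !=set0 by exists (0, 0).
have [_ [x Lx vx]] := supportP v cpL Ln.
have h_ge0 : 0 <= supportf L v.
  by have := (supportP v cpL Ln).1 _ L0; rewrite /dotz /= !mulr0 addr0.
apply: le_trans ((supportP _ cpL Ln).1 _ Lx).
have -> : dotz (g * v.1, g * v.2) x = g%:~R * dotz v x by rewrite /dotz /= !intrM; ring.
by rewrite vx ler_peMl // ler1z.
Qed.

(** * Bodies of lattice width at least 2 cover the plane *)

Lemma unit_point L u v (H : R) : convex_set2 L -> L (0, 0) -> 1 <= H ->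
  (forall x, L x -> `|dotz v x| <= H) -> (exists2 x, L x & H <= dotz u x) ->
  exists2 X, L X & dotz u X = 1 /\ `|dotz v X| <= 1.
Proof.
move=> cL L0 H_ge1 vH [x Lx Hx].
have d_gt0 : 0 < dotz u x by apply: lt_le_trans Hx; apply: lt_le_trans H_ge1.
exists (comb (dotz u x)^-1 (0, 0) x).
  by apply: cL => //; [rewrite invr_ge0 ltW | rewrite invf_le1 //; apply: le_trans Hx].
rewrite !dotz_comb0 mulVf ?gt_eqF //; split => //.
rewrite normrM ger0_norm ?invr_ge0 ?(ltW d_gt0) // mulrC ler_pdivrMr // mul1r.
exact: le_trans (vH x Lx) Hx.
Qed.

Lemma lattice_cover_of_min_direction L v w : compact L -> convex_set2 L -> origin_symmetric L ->
  L (0, 0) -> unimodular v w -> 1 <= supportf L v ->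
  (forall u, u != (0, 0) -> supportf L v <= supportf L u) -> lattice_cover L.
Proof.
move=> cpL cL sL L0 vw H_ge1 vmin; set H := supportf L v.
have Ln : L !=set0 by exists (0, 0).
have sup_le u x : L x -> dotz u x <= supportf L u := (supportP u cpL Ln).1 x.
have vH x : L x -> `|dotz v x| <= H.
  move=> Lx; rewrite ler_norml sup_le // andbT lerNl -dotz_opp; exact: sup_le (sL _ Lx).
have H_le u : u != (0, 0) -> exists2 x, L x & H <= dotz u x.
  move=> /vmin Hu; have [_ [x Lx ux]] := supportP u cpL Ln.
  by exists x; rewrite ?ux.
have [P LP [vP _]] := unit_point cL L0 H_ge1 vH (H_le v (unimodular_neq0 vw).1).
pose k := Num.floor (dotz w P).
pose W := (w.1 - k * v.1, w.2 - k * v.2).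
have vW : unimodular v W by rewrite /unimodular /= -vw; ring.
have WP : dotz W P = dotz w P - k%:~R * dotz v P.
  by rewrite /dotz /= !(intrB, intrM); ring.
rewrite vP mulr1 in WP.
have [Q LQ [WQ vQ]] := unit_point cL L0 H_ge1 vH (H_le W (unimodular_neq0 vW).2).
pose W' := (W.1 - v.1, W.2 - v.2).
have vW' : unimodular v W' by move: vW; rewrite /unimodular /= => <-; ring.
have [S LS [W'S vS]] := unit_point cL L0 H_ge1 vH (H_le W' (unimodular_neq0 vW').2).
apply: (lattice_cover_of_long_half_chord cL sL vW).
apply: (@long_half_chord_PQS W v L P Q S (dotz W P) (dotz v Q) (dotz v S)) => //.
- by rewrite -W'S /dotz /= !intrB; ring.
- by rewrite WP subr_ge0 floor_le /= lerBlDl ltW // -intrD1 floorD1_gt.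
- by rewrite -ler_norml.
- by rewrite -ler_norml.
Qed.

Lemma lattice_cover_compact L rho : compact L -> convex_set2 L -> origin_symmetric L ->
  0 < rho -> square rho `<=` L -> lattice_wide L -> lattice_cover L.
Proof.
move=> cpL cL sL rho_gt0 sqL wideL.
have L0 : L (0, 0) by apply: sqL; rewrite /square /= normr0 ltW.
have Ln : L !=set0 by exists (0, 0).
have sup_ge1 u : u != (0, 0) -> 1 <= supportf L u.
  by move=> /wideL[x Lx]; move/le_trans; apply; exact: (supportP u cpL Ln).1.
have sup_ge u : rho * (`|u.1| + `|u.2|)%:~R <= supportf L u.
  by have [x /sqL Lx <-] := square_dotz u (ltW rho_gt0); exact: (supportP u cpL Ln).1.
have [u0 u0_nz u0_min] := exists_min_nonzero rho_gt0 sup_ge.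
have [v [[w vw] vmin]] := exists_primitive_min u0_nz u0_min
  (fun g v g_gt0 => supportf_mulz v cpL L0 g_gt0).
exact: lattice_cover_of_min_direction cpL cL sL L0 vw (sup_ge1 _ (unimodular_neq0 vw).1) vmin.
Qed.

Lemma lattice_cover_of_wide L rho : closed L -> convex_set2 L -> origin_symmetric L ->
  0 < rho -> square rho `<=` L -> lattice_wide L -> lattice_cover L.
Proof.
move=> clL cL sL rho_gt0 sqL wideL.
pose N := (Num.truncn (1 / rho)).+1.
have N_gt : 1 < rho * N%:R.
  by rewrite -ltr_pdivrMl // mulr1 -[X in X < _]mul1r; exact: truncnS_gt.
have [M0 M0P] : exists M, forall u, in_box N u ->
    exists2 x, (u != (0, 0) -> L x /\ 1 <= dotz u x) & square M x.
  apply: bounded_choice_in_box => u _.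
  case: (boolP (u != (0, 0))) => [/wideL[x Lx ux]|_]; first by exists x.
  by exists (0, 0).
(* Directions in the box keep their witnesses in [square M]; the other
   directions already see width [1] in [square rho]. *)
pose M := `|M0| + rho.
pose L' := square M `&` L.
apply: (@lattice_cover_sub L') => [x []//|].
apply: (@lattice_cover_compact _ rho) => //.
- by apply: compact_closedI => //; exact: compact_square.
- by apply: convex_setI => //; exact: convex_square.
- by apply: origin_symmetricI => //; exact: origin_symmetric_square.
- by move=> x sqx; split; [apply: subset_square sqx; rewrite lerDr | exact: sqL].
move=> u u_nz; have [box_u|out_u] := boolP (in_box N u).
  have [x /(_ u_nz)[Lx ux] sqx] := M0P u box_u.
  exists x => //; split => //; apply: subset_square sqx.
  by rewrite (le_trans (ler_norm _)) // lerDl ltW.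
have [x sqx ux] := square_dotz u (ltW rho_gt0).
exists x; first by split; [apply: subset_square sqx; rewrite lerDr | exact: sqL].
rewrite ux; apply: le_trans (ltW N_gt) _; rewrite ler_pM2l // -[N%:R]/(N%:Z%:~R) ler_int.
by move: out_u; rewrite /in_box; lia.
Qed.

(** * From lines to lattice width *)

Definition meets_all_lines (t : R) K :=
  forall p v : pt, v != (0, 0) -> line p v `&` scaled_translates t K !=set0.

Definition reflection_stable K (c : pt) := forall k, K k -> K (2 * c.1 - k.1, 2 * c.2 - k.2).

Lemma lines_dotz_level K (t s : R) u : u != (0, 0) -> meets_all_lines t K ->
  exists2 k, K k & exists j : int, t * dotz u k + j%:~R = s.
Proof.
move=> u_nz lines; rewrite [u]surjective_pairing xpair_eqE in u_nz.
pose n2 : R := u.1%:~R ^+ 2 + u.2%:~R ^+ 2.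
have n2_gt0 : 0 < n2.
  by rewrite lt_def addr_ge0 ?sqr_ge0 // andbT paddr_eq0 ?sqr_ge0 // !sqrf_eq0 !intr_eq0.
have v_nz : ((- u.2%:~R, u.1%:~R) : pt) != (0, 0).
  by rewrite xpair_eqE oppr_eq0 !intr_eq0 andbC.
pose p : pt := (s / n2 * u.1%:~R, s / n2 * u.2%:~R).
have [X [[r _ <-] [k Kk [z [m [n ->]] [e1 e2]]]]] := lines p _ v_nz.
exists k => //; exists (u.1 * m + u.2 * n).
have -> : s = u.1%:~R * (t * k.1 + m%:~R) + u.2%:~R * (t * k.2 + n%:~R).
  by rewrite e1 e2 /p /n2 /=; field; rewrite -/n2 gt_eqF.
by rewrite /dotz intrD !intrM; ring.
Qed.

Lemma wide_of_lines K c (t : R) u : reflection_stable K c -> meets_all_lines t K ->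
  u != (0, 0) -> exists2 k, K k & 1/2 <= t * dotz u (k.1 - c.1, k.2 - c.2).
Proof.
move=> refl lines u_nz.
have [k Kk [j kj]] := lines_dotz_level (1/2 + t * dotz u c) u_nz lines.
have tk : t * dotz u (k.1 - c.1, k.2 - c.2) = 1/2 - j%:~R.
  by move: kj; rewrite /dotz /= => kj; lra.
have [j_le0|j_gt0] := leP j 0.
  have jR : (j%:~R : R) <= 0 by rewrite lerz0.
  by exists k => //; rewrite tk; lra.
have jR : 1 <= (j%:~R : R) by rewrite ler1z.
exists (2 * c.1 - k.1, 2 * c.2 - k.2); first exact: refl.
have -> : dotz u ((2 * c.1 - k.1, 2 * c.2 - k.2).1 - c.1, (2 * c.1 - k.1, 2 * c.2 - k.2).2 - c.2)
    = - dotz u (k.1 - c.1, k.2 - c.2) by rewrite /dotz /=; ring.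
by rewrite mulrN tk; lra.
Qed.

Definition dilate K (c : pt) (r : R) : set pt := [set x | K (c.1 + r^-1 * x.1, c.2 + r^-1 * x.2)].

Lemma closed_dilate K c r : closed K -> closed (dilate K c r).
Proof.
move=> clK.
have -> : dilate K c r = (fun x : pt => (c.1 + r^-1 * x.1, c.2 + r^-1 * x.2)) @^-1` K by [].
apply: preimage_closed => // x _.
apply: (@cvg_pair _ _ _ _ (nbhs (c.1 + r^-1 * x.1)) (nbhs (c.2 + r^-1 * x.2))).
  by apply: cvgD; [exact: cvg_cst | apply: cvgMl_tmp; exact: cvg_fst].
by apply: cvgD; [exact: cvg_cst | apply: cvgMl_tmp; exact: cvg_snd].
Qed.

Lemma convex_dilate K c r : convex_set2 K -> convex_set2 (dilate K c r).
Proof.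
move=> cK x y Kx Ky l l0 l1; rewrite /dilate /=.
by have := cK _ _ Kx Ky l l0 l1; congr K; rewrite /add_pt /scale_pt /=; congr pair; ring.
Qed.

Lemma origin_symmetric_dilate K c r : reflection_stable K c -> origin_symmetric (dilate K c r).
Proof. by move=> refl x /refl; rewrite /dilate /=; congr K; congr pair; ring. Qed.

Lemma centred_square K c : convex_set2 K -> reflection_stable K c -> interior K !=set0 ->
  exists2 e : R, 0 < e & forall y : pt, `|y.1 - c.1| <= e -> `|y.2 - c.2| <= e -> K y.
Proof.
move=> cK refl [x0 /nbhs_ballP[e e_gt0' x0_ball]].
have e_gt0 : 0 < e := e_gt0'. (* restated at [R] for [lra] *)
have near_x0 (y : pt) : `|y.1 - x0.1| < e -> `|y.2 - x0.2| < e -> K y.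
  by move=> h1 h2; apply: x0_ball; split => /=; rewrite -ball_normE /ball_ /= distrC.
exists (e / 2) => [|y h1 h2]; first by rewrite divr_gt0.
have KA : K (y.1 + x0.1 - c.1, y.2 + x0.2 - c.2).
  by apply: near_x0 => /=; rewrite addrAC addrK; lra.
have KB : K (c.1 - y.1 + x0.1, c.2 - y.2 + x0.2).
  by apply: near_x0 => /=; rewrite addrK -opprB normrN; lra.
(* [y] is the midpoint of [x0 + (y - c)] and the reflection of [x0 - (y - c)] *)
have := cK _ _ KA (refl _ KB) (1/2) _ _; rewrite /add_pt /scale_pt /=.
have -> : (1 - 1/2) * (y.1 + x0.1 - c.1) + 1/2 * (2 * c.1 - (c.1 - y.1 + x0.1)) = y.1 by field.
have -> : (1 - 1/2) * (y.2 + x0.2 - c.2) + 1/2 * (2 * c.2 - (c.2 - y.2 + x0.2)) = y.2 by field.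
by rewrite -surjective_pairing; apply; lra.
Qed.

Lemma square_sub_dilate K c (r e : R) : 0 < r ->
  (forall y : pt, `|y.1 - c.1| <= e -> `|y.2 - c.2| <= e -> K y) ->
  square (r * e) `<=` dilate K c r.
Proof.
move=> r_gt0 sqK x [x1 x2]; apply: sqK => /=;
  by rewrite addrAC subrr add0r normrM gtr0_norm ?invr_gt0 // ler_pdivrMl.
Qed.

Lemma wide_dilate K c (t : R) : 0 < t -> reflection_stable K c -> meets_all_lines t K ->
  lattice_wide (dilate K c (2 * t)).
Proof.
move=> t_gt0 refl lines u u_nz; have [k Kk ku] := wide_of_lines refl lines u_nz.
exists (2 * t * (k.1 - c.1), 2 * t * (k.2 - c.2)).
  rewrite /dilate /= !mulKf ?mulf_neq0 ?gt_eqF //.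
  by rewrite (addrC c.1) (addrC c.2) !subrK -surjective_pairing.
have -> : dotz u (2 * t * (k.1 - c.1), 2 * t * (k.2 - c.2)) =
         2 * (t * dotz u (k.1 - c.1, k.2 - c.2)) by rewrite /dotz /=; ring.
lra.
Qed.

Lemma scaled_translates_of_cover K c (r : R) : r != 0 -> lattice_cover (dilate K c r) ->
  scaled_translates r K = [set: pt].
Proof.
move=> r_neq0 covK; apply/seteqP; split => // y _.
have [[m n] Kk] := covK (y.1 - r * c.1, y.2 - r * c.2).
exists (c.1 + r^-1 * (y.1 - r * c.1 - m%:~R), c.2 + r^-1 * (y.2 - r * c.2 - n%:~R)) => //.
exists (m%:~R, n%:~R); first by exists m, n.
by rewrite /add_pt /scale_pt /= [RHS]surjective_pairing; congr pair; field.
Qed.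

Lemma scaled_translates_twice K (t : R) : closed K -> convex_set2 K -> interior K !=set0 ->
  centrally_symmetric K -> 0 <= t -> meets_all_lines t K ->
  scaled_translates (2 * t) K = [set: pt].
Proof.
move=> clK cK intK [c Kc] t_ge0 lines.
have refl : reflection_stable K c by move=> k Kk; rewrite Kc; exists k.
have t_gt0 : 0 < t.
  have [k _] := wide_of_lines (u := (1, 0)) refl lines isT.
  by rewrite lt_def t_ge0 andbT; apply: contraTneq => ->; rewrite mul0r; lra.
have [e e_gt0 sqK] := centred_square cK refl intK.
have tt_gt0 : 0 < 2 * t by rewrite mulr_gt0.
apply: (scaled_translates_of_cover (c := c) (lt0r_neq0 tt_gt0)).
apply: (lattice_cover_of_wide (rho := 2 * t * e)).
- exact: closed_dilate.
- exact: convex_dilate.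
- exact: origin_symmetric_dilate.
- exact: mulr_gt0.
- exact: square_sub_dilate.
- exact: wide_dilate.
Qed.

End LatticeCovering.

Theorem theorem5 (R : realType) (K : set (R * R)%type) :
  closed K -> convex_set2 K -> interior K !=set0 -> centrally_symmetric K ->
  mu2 K <= 2 * mu1 K.
Proof.
move=> clK cK intK sK; rewrite /mu1 /mu2.
set S2 := [set t : R | 0 <= t /\ _]; set S1 := [set t : R | 0 <= t /\ _].
have S1_S2 t : S1 t -> S2 (2 * t).
  by move=> [t0 lines]; split; [rewrite mulr_ge0 | exact: scaled_translates_twice].
have S2_S1 t : S2 t -> S1 t.
  move=> [t0 cover]; split => // p v _; exists p; split; last by rewrite cover.
  by exists 0 => //; rewrite /add_pt /scale_pt /= !mul0r !addr0 -surjective_pairing.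
have [[t1 S1t1]|S1_0] := pselect (S1 !=set0).
  have S2_lb : has_lbound S2 by exists 0 => x [].
  have : lbound S1 (inf S2 / 2) by move=> t /S1_S2 /(ge_inf S2_lb); lra.
  by move=> /(lb_le_inf (ex_intro _ t1 S1t1)); lra.
have S1_eq0 : S1 = set0 by apply/seteqP; split => // t S1t; apply: S1_0; exists t.
have S2_eq0 : S2 = set0 by apply/seteqP; split => // t /S2_S1 S1t; apply: S1_0; exists t.
by rewrite S1_eq0 S2_eq0 inf0 mulr0.
Qed.
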